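(* Let $n\ge2$, $1\le r\le n-1$, $\alpha,\beta,\gamma\in\mathbb{Z}_2^{n-r}$ and $\alpha',\beta',\gamma'\in\mathbb{Z}_2^{r}$. Then $$\mathrm{adp}^{\mathrm{XR}}_r(\alpha'\|\alpha,\ \beta'\|\beta\to\gamma\|\gamma')=\sum_{a,b,c\in\mathbb{Z}_2}\mathrm{padp}_{a,b}(\alpha,\beta,\gamma^{[c]})\,\mathrm{cadp}_{c}(\alpha'^{[a]},\beta'^{[b]},\gamma').$$
   Context: For $x\in\mathbb{Z}_2^m$, $x=(x_0,\dots,x_{m-1})$ is identified with the integer $\sum_i x_i2^{m-1-i}$; arithmetic on $\mathbb{Z}_2^n$ is modulo $2^n$. $\oplus$ is bitwise XOR, $x\lll r=(x_r,\dots,x_{n-1},x_0,\dots,x_{r-1})$, $\overline{x}$ is the bitwise complement, $x^{[a]}=x$ if $a=0$ and $x^{[a]}=\overline{x}$ if $a=1$, and $\alpha\|\beta$ is concatenation ($\alpha$ occupying the most significant positions). $\mathrm{adp}^{\mathrm{XR}}_r(\alpha,\beta\to\gamma)=4^{-n}\#\{(x,y)\in(\mathbb{Z}_2^n)^2: ((x+\alpha)\oplus(y+\beta))\lll r=((x\oplus y)\lll r)+\gamma\}$. Indices $0,\dots,7$ are identified with $\mathbb{Z}_2^3$ via $(p_0,p_1,p_2)\leftrightarrow4p_0+2p_1+p_2$; $e_0,\dots,e_7$ are the standard basis row vectors of $\mathbb{Q}^8$. $A_0$ is the $8\times8$ matrix $\frac14$ times the matrix with rows $(4,0,0,1,0,1,1,0)$,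 $(0,0,0,1,0,1,0,0)$, $(0,0,0,1,0,0,1,0)$, $(0,0,0,1,0,0,0,0)$, $(0,0,0,0,0,1,1,0)$, $(0,0,0,0,0,1,0,0)$, $(0,0,0,0,0,0,1,0)$, $(0,\dots,0)$ (rows and columns indexed $0,\dots,7$), and $(A_k)_{i,j}=(A_0)_{i\oplus k,j\oplus k}$ for $k\in\mathbb{Z}_2^3$. For $\alpha,\beta,\gamma\in\mathbb{Z}_2^m$ let $\omega_i=4\alpha_i+2\beta_i+\gamma_i$. Let $L_0=(1,0,1,0,1,0,1,0)$, $L_1=(0,1,0,1,0,1,0,1)$, $L_{0,0}=(1,1,0,0,0,0,0,0)$, $L_{0,1}=(0,0,1,1,0,0,0,0)$, $L_{1,0}=(0,0,0,0,1,1,0,0)$, $L_{1,1}=(0,0,0,0,0,0,1,1)$, and define $\mathrm{cadp}_c(\alpha,\beta,\gamma)=L_cA_{\omega_0}\cdots A_{\omega_{m-1}}e_0^T$ and $\mathrm{padp}_{a,b}(\alpha,\beta,\gamma)=L_{a,b}A_{\omega_0}\cdots A_{\omega_{m-1}}e_0^T$. *)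

From mathcomp Require Import all_boot all_order all_algebra.
Set Implicit Arguments. Unset Strict Implicit. Unset Printing Implicit Defensive.
Import GRing.Theory Num.Theory.

(* Bit vectors in Z_2^m: x = (x_0, ..., x_{m-1}), x_0 is the MOST significant bit. *)
Definition bv (m : nat) := m.-tuple bool.

Definition bit {m} (x : bv m) (i : nat) : bool := nth false x i.

Definition bv_to_nat {m} (x : bv m) : nat := \sum_(i < m) (bit x i) * 2 ^ (m.-1 - i).

Definition bv_of_nat (m v : nat) : bv m := [tuple odd (v %/ 2 ^ (m.-1 - i)) | i < m].

Definition bv_add {n} (x y : bv n) : bv n := bv_of_nat n (bv_to_nat x + bv_to_nat y).

Definition bv_xor {n} (x y : bv n) : bv n := [tuple bit x i (+) bit y i | i < n].

Definition bv_rotl {n} (x : bv n) (r : nat) : bv n := [tuple bit x ((i + r) %% n) | i < n].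

Definition bv_compl {n} (x : bv n) : bv n := [tuple ~~ bit x i | i < n].

Definition bv_cpow {n} (x : bv n) (a : bool) : bv n := if a then bv_compl x else x.

(* a || b (a in the most significant positions), as a vector of length n;
   used with n = k + l *)
Definition bv_cat (n : nat) {k l} (a : bv k) (b : bv l) : bv n :=
  [tuple nth false (val a ++ val b) i | i < n].

Definition adpXR (n r : nat) (al be ga : bv n) : rat :=
  (#|[set xy : bv n * bv n |
      bv_rotl (bv_xor (bv_add xy.1 al) (bv_add xy.2 be)) r
      == bv_add (bv_rotl (bv_xor xy.1 xy.2) r) ga]|)%:R / (4 ^ n)%:R.

Local Open Scope ring_scope.

Definition A0_rows : seq (seq nat) :=
  [:: [:: 4; 0; 0; 1; 0; 1; 1; 0];
      [:: 0; 0; 0; 1; 0; 1; 0; 0];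
      [:: 0; 0; 0; 1; 0; 0; 1; 0];
      [:: 0; 0; 0; 1; 0; 0; 0; 0];
      [:: 0; 0; 0; 0; 0; 1; 1; 0];
      [:: 0; 0; 0; 0; 0; 1; 0; 0];
      [:: 0; 0; 0; 0; 0; 0; 1; 0];
      [:: 0; 0; 0; 0; 0; 0; 0; 0]].

Definition A0 : 'M[rat]_8 :=
  \matrix_(i < 8, j < 8) ((nth 0%N (nth [::] A0_rows i) j)%:R / 4%:R).

(* xor of indices in 0..7, viewed as elements of Z_2^3 via 4p0+2p1+p2 *)
Definition xor3 (i k : 'I_8) : 'I_8 :=
  inord (4 * (odd (i %/ 4) (+) odd (k %/ 4)) + 2 * (odd (i %/ 2) (+) odd (k %/ 2))
         + (odd i (+) odd k))%N.

Definition Amat (k : 'I_8) : 'M[rat]_8 := \matrix_(i, j) A0 (xor3 i k) (xor3 j k).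

Definition omega {m} (al be ga : bv m) (i : nat) : 'I_8 :=
  inord (4 * bit al i + 2 * bit be i + bit ga i)%N.

Definition Aprod {m} (al be ga : bv m) : 'M[rat]_8 :=
  \prod_(i < m) Amat (omega al be ga i).

Definition rowv (s : seq nat) : 'rV[rat]_8 := \row_(j < 8) (nth 0%N s j)%:R.

Definition e0T : 'cV[rat]_8 := \col_(j < 8) (if j == 0 :> nat then 1 else 0).

Definition Lc (c : bool) : 'rV[rat]_8 :=
  if c then rowv [:: 0; 1; 0; 1; 0; 1; 0; 1]%N else rowv [:: 1; 0; 1; 0; 1; 0; 1; 0]%N.

Definition Lab (a b : bool) : 'rV[rat]_8 :=
  match a, b with
  | false, false => rowv [:: 1; 1; 0; 0; 0; 0; 0; 0]%N
  | false, true  => rowv [:: 0; 0; 1; 1; 0; 0; 0; 0]%N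
  | true,  false => rowv [:: 0; 0; 0; 0; 1; 1; 0; 0]%N
  | true,  true  => rowv [:: 0; 0; 0; 0; 0; 0; 1; 1]%N
  end.

Definition cadp (c : bool) {m} (al be ga : bv m) : rat :=
  (Lc c *m Aprod al be ga *m e0T) 0 0.

Definition padp (a b : bool) {m} (al be ga : bv m) : rat :=
  (Lab a b *m Aprod al be ga *m e0T) 0 0.

Arguments adpXR : clear implicits.

From mathcomp Require Import all_boot all_order all_algebra zify.
Set Implicit Arguments. Unset Strict Implicit. Unset Printing Implicit Defensive.
Import GRing.Theory Num.Theory.

(* The eight states index the carries of the three additions x + alpha, y + beta and
   (x (+) y) + gamma hidden in the equation (x + alpha) (+) (y + beta) = (x (+) y) + gamma.
   Four times an entry A_w[t][u] counts the bit pairs (x_i, y_i) that satisfy the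
   equation at position i and move the carries from u to t, so 4^m times a product of
   the A_w counts pairs of m-bit words by their initial and final carries.
   Complementing alpha, beta or gamma only relabels the states by an xor, i.e. it
   amounts to starting from another carry state.  After the rotation by r the equation
   for alpha' || alpha splits into one for the low n - r bits, started with carries
   (0, 0, c) and passing the carries (a, b) on to the high part, and one for the high
   r bits, started with carries (a, b, 0) and passing the carry c on to the low part;
   summing over a, b, c gives the formula. *)

(** * Binary addition on bit sequences *)

Definition maj (x a c : bool) : bool := (x && a) || (c && (x (+) a)).

(* Sequences are big-endian: [addc] adds from the last bit on and returns the carry
   out of the first one. *)
Fixpoint addc (x a : seq bool) (c : bool) : seq bool * bool :=
  match x, a with
  | x0 :: x', a0 :: a' => let p := addc x' a' c in (x0 (+) a0 (+) p.2 :: p.1, maj x0 a0 p.2)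
  | _, _ => ([::], c)
  end.

Definition xors (x y : seq bool) : seq bool := [seq p.1 (+) p.2 | p <- zip x y].

Fixpoint bits_val (s : seq bool) : nat :=
  if s is b :: t then b * 2 ^ size t + bits_val t else 0.

Fixpoint bits_of (m v : nat) : seq bool :=
  if m is m'.+1 then odd (v %/ 2 ^ m') :: bits_of m' v else [::].

Lemma size_bits_of m v : size (bits_of m v) = m.
Proof. by elim: m => //= m ->. Qed.

Lemma bits_val_lt s : bits_val s < 2 ^ size s.
Proof. by elim: s => [|[] t IH] //=; rewrite expnS; lia. Qed.

Lemma bits_valE s : \sum_(i < size s) nth false s i * 2 ^ ((size s).-1 - i) = bits_val s.
Proof.
elim: s => [|b t IH] /=; first by rewrite big_ord0.
rewrite big_ord_recl subn0 -IH; congr (_ + _); apply: eq_bigr => i _.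
by rewrite lift0 subnS predn_sub.
Qed.

Lemma bv_to_natE m (x : bv m) : bv_to_nat x = bits_val x.
Proof. by rewrite /bv_to_nat /bit; case: x => s /= /eqP <-; rewrite bits_valE. Qed.

Lemma bv_of_natE m v : tval (bv_of_nat m v) = bits_of m v.
Proof.
apply: (@eq_from_nth _ false) => [|i]; first by rewrite size_tuple size_bits_of.
rewrite size_tuple => lt_im; rewrite -[i]/(nat_of_ord (Ordinal lt_im)) nth_mktuple /=.
elim: m i lt_im => [|m IH] [|i] //= lt_im; first by rewrite subn0.
by rewrite -IH // subnS predn_sub.
Qed.

Lemma bits_of_val m u q : size u = m -> bits_of m (bits_val u + q * 2 ^ m) = u.
Proof.
move=> <-; elim: u q => [|b t IH] q //=.
have -> : b * 2 ^ size t + bits_val t + q * 2 ^ (size t).+1 =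
          bits_val t + (b + 2 * q) * 2 ^ size t by rewrite expnS; lia.
rewrite IH divnDr ?dvdn_mull // divn_small ?bits_val_lt // mulnK ?expn_gt0 //.
by rewrite add0n oddD oddM; case: b.
Qed.

Lemma size_addc x a c : size x = size a -> size (addc x a c).1 = size x.
Proof. by elim: x a => [|x0 x IH] [|a0 a] //= /succn_inj/IH ->. Qed.

Lemma addc_val x a c : size x = size a ->
  bits_val (addc x a c).1 + (addc x a c).2 * 2 ^ size x = bits_val x + bits_val a + c.
Proof.
elim: x a => [|x0 x IH] [|a0 a] //=; first by rewrite muln1.
move=> /succn_inj sz.
move: (IH a sz) (size_addc c sz); rewrite -sz.
case: (addc x a c) => s c' /= E ->; rewrite expnS /maj.
by case: x0 E; case: a0; case: c' => /=; lia.
Qed.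

Lemma bv_eqE m (x y : bv m) : (x == y) = (tval x == tval y).
Proof. by []. Qed.

Lemma val_bv_add m (x y : bv m) : tval (bv_add x y) = (addc x y false).1.
Proof.
have sz : size x = size y by rewrite !size_tuple.
rewrite /bv_add bv_of_natE !bv_to_natE -(addn0 (_ + _)) -(addc_val false sz).
by rewrite size_tuple bits_of_val // size_addc // size_tuple.
Qed.

Lemma size_xors x y : size x = size y -> size (xors x y) = size x.
Proof. by move=> sz; rewrite size_map size_zip sz minnn. Qed.

Lemma val_bv_xor m (x y : bv m) : tval (bv_xor x y) = xors x y.
Proof.
apply: (@eq_from_nth _ false) => [|i]; first by rewrite size_xors !size_tuple.
rewrite size_tuple => lt_im; rewrite -[i]/(nat_of_ord (Ordinal lt_im)) nth_mktuple.
by rewrite (nth_map (false, false)) ?nth_zip ?size_zip ?size_tuple ?minnn.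
Qed.

Lemma val_bv_rotl m (x : bv m) r : r <= m -> tval (bv_rotl x r) = rot r x.
Proof.
move=> le_rm; apply: (@eq_from_nth _ false) => [|i]; first by rewrite size_rot !size_tuple.
rewrite size_tuple => lt_im; rewrite -[i]/(nat_of_ord (Ordinal lt_im)) nth_mktuple /=.
rewrite /bit /rot nth_cat size_drop size_tuple; case: ltnP => [lt_i|le_i].
  by rewrite nth_drop modn_small 1?addnC //; lia.
rewrite nth_take; last by lia.
have -> : i + r = i - (m - r) + m by lia.
by rewrite modnDr modn_small //; lia.
Qed.

Lemma val_bv_cat n k l (a : bv k) (b : bv l) : k + l = n -> tval (bv_cat n a b) = a ++ b.
Proof.
move=> sz; apply: (@eq_from_nth _ false) => [|i]; first by rewrite size_cat !size_tuple.
by rewrite size_tuple => lt_in; rewrite -[i]/(nat_of_ord (Ordinal lt_in)) nth_mktuple.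
Qed.

Lemma bit_cpow m (x : bv m) a i : (i < m)%N -> bit (bv_cpow x a) i = bit x i (+) a.
Proof.
case: a => [lt_im|]; last by rewrite addbF.
by rewrite /bv_cpow /bv_compl /bit -[i]/(nat_of_ord (Ordinal lt_im)) nth_mktuple addbT.
Qed.

Lemma addc_cat x1 x2 a1 a2 c : size x1 = size a1 ->
  addc (x1 ++ x2) (a1 ++ a2) c =
  ((addc x1 a1 (addc x2 a2 c).2).1 ++ (addc x2 a2 c).1, (addc x1 a1 (addc x2 a2 c).2).2).
Proof.
elim: x1 a1 => [|x0 x1 IH] [|a0 a1] //=; first by case: (addc x2 a2 c).
by move=> /succn_inj sz; rewrite IH.
Qed.

Lemma xors_cat x1 x2 y1 y2 :
  size x1 = size y1 -> xors (x1 ++ x2) (y1 ++ y2) = xors x1 y1 ++ xors x2 y2.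
Proof. by move=> sz; rewrite /xors zip_cat // map_cat. Qed.

Local Open Scope ring_scope.

(** * Carry states *)

Definition pidx (p0 p1 p2 : bool) : nat := (4 * p0 + 2 * p1 + p2)%N.
Definition pord (p0 p1 p2 : bool) : 'I_8 := inord (pidx p0 p1 p2).
Definition pbit0 (s : nat) : bool := odd (s %/ 4).
Definition pbit1 (s : nat) : bool := odd (s %/ 2).
Definition pbit2 (s : nat) : bool := odd s.

Lemma pidx_lt p0 p1 p2 : (pidx p0 p1 p2 < 8)%N.
Proof. by case: p0; case: p1; case: p2. Qed.

Lemma pordE p0 p1 p2 : nat_of_ord (pord p0 p1 p2) = pidx p0 p1 p2.
Proof. by rewrite inordK ?pidx_lt. Qed.

Lemma pbit_pidx p0 p1 p2 :
  [/\ pbit0 (pidx p0 p1 p2) = p0, pbit1 (pidx p0 p1 p2) = p1 & pbit2 (pidx p0 p1 p2) = p2].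
Proof. by case: p0; case: p1; case: p2. Qed.

Lemma pidx_pbit (s : 'I_8) : pidx (pbit0 s) (pbit1 s) (pbit2 s) = s.
Proof. by case: s => [[|[|[|[|[|[|[|[|]]]]]]]] //]. Qed.

Lemma pord_pbit (s : 'I_8) : pord (pbit0 s) (pbit1 s) (pbit2 s) = s.
Proof. by apply: val_inj; rewrite /= pordE pidx_pbit. Qed.

Lemma pbit_pord p0 p1 p2 :
  [/\ pbit0 (pord p0 p1 p2) = p0, pbit1 (pord p0 p1 p2) = p1 & pbit2 (pord p0 p1 p2) = p2].
Proof. by rewrite pordE; apply: pbit_pidx. Qed.

Lemma pord_ind (P : 'I_8 -> Prop) : (forall a b c, P (pord a b c)) -> forall s, P s.
Proof. by move=> IH s; rewrite -(pord_pbit s). Qed.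

Lemma xor3E (s k : 'I_8) :
  xor3 s k = pord (pbit0 s (+) pbit0 k) (pbit1 s (+) pbit1 k) (pbit2 s (+) pbit2 k).
Proof. by []. Qed.

Lemma pbit_xor3 s k : [/\ pbit0 (xor3 s k) = pbit0 s (+) pbit0 k,
  pbit1 (xor3 s k) = pbit1 s (+) pbit1 k & pbit2 (xor3 s k) = pbit2 s (+) pbit2 k].
Proof. by rewrite xor3E; apply: pbit_pord. Qed.

Lemma xor3_pord a b c a' b' c' :
  xor3 (pord a b c) (pord a' b' c') = pord (a (+) a') (b (+) b') (c (+) c').
Proof. by rewrite xor3E; case: (pbit_pord a b c) (pbit_pord a' b' c') => -> -> -> [-> -> ->]. Qed.

Lemma xor3K k : involutive (xor3^~ k).
Proof.
by elim/pord_ind: k => a b c s; elim/pord_ind: s => ? ? ?; rewrite /= !xor3_pord !addbK.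
Qed.

Lemma xor3_inj k : injective (xor3^~ k).
Proof. exact: inv_inj (xor3K k). Qed.

Lemma xor3AC t i k : xor3 t (xor3 i k) = xor3 (xor3 t k) i.
Proof.
elim/pord_ind: t => ? ? ?; elim/pord_ind: i => ? ? ?; elim/pord_ind: k => ? ? ?.
by rewrite !xor3_pord; congr pord; rewrite addbA addbAC.
Qed.

Lemma xor3_pordE (s : 'I_8) a b g :
  nat_of_ord (xor3 s (pord a b g)) = pidx (pbit0 s (+) a) (pbit1 s (+) b) (pbit2 s (+) g).
Proof. by rewrite xor3E pordE; case: (pbit_pord a b g) => -> -> ->. Qed.

(** * Products of the matrices count carry transitions *)

Definition step (a b g x y : bool) (u t : nat) : bool :=
  ((x (+) a (+) pbit0 u) (+) (y (+) b (+) pbit1 u) == (x (+) y) (+) g (+) pbit2 u) &&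
  (pidx (maj x a (pbit0 u)) (maj y b (pbit1 u)) (maj (x (+) y) g (pbit2 u)) == t).

Lemma A0_step_table : all (fun a => all (fun b => all (fun g =>
  all (fun t => all (fun u =>
    let entry := nth 0%N (nth [::] A0_rows (pidx (pbit0 t (+) a) (pbit1 t (+) b) (pbit2 t (+) g)))
                   (pidx (pbit0 u (+) a) (pbit1 u (+) b) (pbit2 u (+) g)) in
    entry == (step a b g true true u t + step a b g true false u t +
             (step a b g false true u t + step a b g false false u t))%N)
  (iota 0 8)) (iota 0 8)) [:: true; false]) [:: true; false]) [:: true; false].
Proof. by vm_compute. Qed.

Lemma Amat_step a b g (t u : 'I_8) :
  Amat (pord a b g) t u * 4%:R = \sum_(x : bool) \sum_(y : bool) (step a b g x y u t)%:R.
Proof.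
have bools c : c \in [:: true; false] by case: c.
have ord8 (s : 'I_8) : nat_of_ord s \in iota 0 8 by rewrite mem_iota ltn_ord.
rewrite /Amat /A0 !mxE !xor3_pordE divfK // !big_bool /= -!natrD.
move: A0_step_table => /allP/(_ a (bools a))/allP/(_ b (bools b))/allP/(_ g (bools g)).
by move=> /allP/(_ t (ord8 t))/allP/(_ u (ord8 u))/eqP ->.
Qed.

Definition transition (al be ga x y : seq bool) (s t : nat) : bool :=
  let p1 := addc x al (pbit0 s) in
  let p2 := addc y be (pbit1 s) in
  let p3 := addc (xors x y) ga (pbit2 s) in
  (xors p1.1 p2.1 == p3.1) && (pidx p1.2 p2.2 p3.2 == t).

Lemma transition_cons a b g al be ga x0 y0 x y s t :
  (transition (a :: al) (b :: be) (g :: ga) (x0 :: x) (y0 :: y) s t)%:R =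
  \sum_(u < 8) (transition al be ga x y s u)%:R * (step a b g x0 y0 u t)%:R :> rat.
Proof.
rewrite /transition /=.
set p1 := addc x al _; set p2 := addc y be _; set p3 := addc (xors x y) ga _.
have pick (A B : bool) (C : rat) : (A && B)%:R * C = if B then A%:R * C else 0.
  by case: A; case: B; rewrite /= ?mul0r.
under eq_bigr do rewrite pick [pidx _ _ _ == _]eq_sym.
rewrite -big_mkcond (eq_bigl (eq_op^~ (pord p1.2 p2.2 p3.2))) => [|u]; last first.
  by rewrite -val_eqE /= pordE.
rewrite big_pred1_eq pordE /step.
case: (pbit_pidx p1.2 p2.2 p3.2) => -> -> ->.
rewrite [xors (_ :: _) _]/xors /= eqseq_cons -/(xors _ _).
by rewrite -natrM mulnb andbCA andbA.
Qed.

Section InterleavedSums.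
Variables (R : comPzSemiRingType) (I J K : Type).
Variables (X : seq I) (Y : seq J) (Z : seq K).

Lemma exchange_sum4 (F : K -> I -> J -> I -> J -> R) :
  \sum_(x1 <- X) \sum_(y1 <- Y) \sum_(x2 <- X) \sum_(y2 <- Y) \sum_(k <- Z) F k x1 y1 x2 y2 =
  \sum_(k <- Z) \sum_(x1 <- X) \sum_(y1 <- Y) \sum_(x2 <- X) \sum_(y2 <- Y) F k x1 y1 x2 y2.
Proof.
symmetry; rewrite exchange_big; apply: eq_bigr => x1 _.
rewrite exchange_big; apply: eq_bigr => y1 _.
by rewrite exchange_big; apply: eq_bigr => x2 _; rewrite exchange_big.
Qed.

Lemma mul_sum2 (F : I -> I -> R) (G : J -> J -> R) :
  (\sum_(x1 <- X) \sum_(x2 <- X) F x1 x2) * (\sum_(y1 <- Y) \sum_(y2 <- Y) G y1 y2) =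
  \sum_(x1 <- X) \sum_(y1 <- Y) \sum_(x2 <- X) \sum_(y2 <- Y) F x1 x2 * G y1 y2.
Proof.
rewrite big_distrl; apply: eq_bigr => x1 _; rewrite big_distrl [RHS]exchange_big.
apply: eq_bigr => x2 _; rewrite big_distrr; apply: eq_bigr => y1 _.
by rewrite big_distrr.
Qed.

End InterleavedSums.

Fixpoint bitseqs (m : nat) : seq (seq bool) :=
  if m is m'.+1 then [seq true :: s | s <- bitseqs m'] ++ [seq false :: s | s <- bitseqs m']
  else [:: [::]].

Lemma big_bitseqsS (F : seq bool -> rat) m :
  \sum_(s <- bitseqs m.+1) F s = \sum_(b : bool) \sum_(s <- bitseqs m) F (b :: s).
Proof. by rewrite /= big_cat !big_map big_bool. Qed.

Definition transitions (al be ga : seq bool) (m s t : nat) : rat :=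
  \sum_(x <- bitseqs m) \sum_(y <- bitseqs m) (transition al be ga x y s t)%:R.

Definition omegas (al be ga : seq bool) (i : nat) : 'I_8 :=
  pord (nth false al i) (nth false be i) (nth false ga i).

Lemma prod_Amat_transitions m (al be ga : seq bool) (s t : 'I_8) :
  size al = m -> size be = m -> size ga = m ->
  (\prod_(i < m) Amat (omegas al be ga i)) t s * (4 ^ m)%:R = transitions al be ga m s t.
Proof.
elim: m al be ga s t => [|m IH] [|a al] [|b be] [|g ga] // s t.
  by rewrite big_ord0 /transitions !big_seq1 /transition /= pidx_pbit mxE mulr1 eq_sym.
move=> [sa] [sb] [sg]; rewrite big_ord_recl.
have -> : \prod_(i < m) Amat (omegas (a :: al) (b :: be) (g :: ga) (lift ord0 i)) =
          \prod_(i < m) Amat (omegas al be ga i) by [].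
rewrite -mulmxE mxE mulr_suml expnS natrM.
under eq_bigr do rewrite mulrACA Amat_step IH // mul_sum2.
rewrite -exchange_sum4 /transitions big_bitseqsS; apply: eq_bigr => x0 _.
apply: eq_bigr => x _; rewrite big_bitseqsS; apply: eq_bigr => y0 _.
by apply: eq_bigr => y _; rewrite transition_cons; under eq_bigr do rewrite mulrC.
Qed.

(** * Complementation permutes the carry states *)

Lemma Amat_xor3 w k t u : Amat (xor3 w k) t u = Amat w (xor3 t k) (xor3 u k).
Proof. by rewrite /Amat !mxE !xor3AC. Qed.

Lemma prod_Amat_xor3 m (w : nat -> 'I_8) k t s :
  (\prod_(i < m) Amat (xor3 (w i) k)) t s = (\prod_(i < m) Amat (w i)) (xor3 t k) (xor3 s k).
Proof.
elim: m w t s => [|m IH] w t s.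
  by rewrite !big_ord0 !mxE (inj_eq (@xor3_inj k)).
rewrite !big_ord_recl -!mulmxE !mxE (reindex_inj (@xor3_inj k)) /=.
apply: eq_bigr => u _; rewrite Amat_xor3 xor3K.
by rewrite (IH (fun i => w (bump 0 i))) xor3K.
Qed.

Lemma Aprod_cpow m (al be ga : bv m) a b g :
  Aprod (bv_cpow al a) (bv_cpow be b) (bv_cpow ga g) =
  \prod_(i < m) Amat (xor3 (omegas al be ga i) (pord a b g)).
Proof.
apply: eq_bigr => i _.
have omegaE x y z : omega x y z i = pord (bit x i) (bit y i) (bit z i) by [].
by rewrite omegaE !bit_cpow // /omegas xor3_pord.
Qed.

Lemma e0T_delta : e0T = delta_mx 0 0.
Proof. by apply/matrixP => i j; rewrite !mxE ord1 eqxx andbT; case: i => [[|i] ?]. Qed.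

Lemma form_Aprod_cpow m (al be ga : bv m) a b g (L : 'rV[rat]_8) :
  (forall t, L 0 (xor3 t (pord a b g)) = L 0 t) ->
  (L *m Aprod (bv_cpow al a) (bv_cpow be b) (bv_cpow ga g) *m e0T) 0 0 * (4 ^ m)%:R =
  \sum_(t < 8) L 0 t * transitions al be ga m (pord a b g) t.
Proof.
move=> L_xor3; set k := pord a b g.
rewrite e0T_delta -colE mxE mxE mulr_suml (reindex_inj (@xor3_inj k)).
apply: eq_bigr => t _; rewrite Aprod_cpow prod_Amat_xor3 xor3K L_xor3 -mulrA.
have -> : xor3 0 k = k by rewrite /k -[0](pord_pbit 0) xor3_pord.
by rewrite prod_Amat_transitions ?size_tuple.
Qed.

(** * Counting over bit sequences *)

Lemma mem_bitseqs m s : (s \in bitseqs m) = (size s == m).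
Proof.
have mem_cons c b t B : (b :: t \in [seq c :: u | u <- B]) = (b == c) && (t \in B).
  by apply/mapP/andP => [[u ? [-> ->]]|[/eqP -> ?]]; [split | exists t].
elim: m s => [|m IH] [|b s] //=; rewrite mem_cat.
  by apply/negbTE/orP => -[] /mapP [].
by rewrite !mem_cons IH eqSS; case: b; rewrite /= ?orbF.
Qed.

Lemma bitseqs_uniq m : uniq (bitseqs m).
Proof.
have cons_inj (b : bool) : injective (cons b) by move=> ? ? [].
elim: m => //= m IH; rewrite cat_uniq !(map_inj_uniq (cons_inj _)) IH andbT /=.
by apply/hasPn => _ /mapP [s _ ->]; apply/mapP => -[x _ []].
Qed.

Lemma big_tuple_bitseqs (F : seq bool -> rat) m :
  \sum_(x : bv m) F x = \sum_(s <- bitseqs m) F s.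
Proof.
rewrite -(big_map val xpredT F); apply/perm_big/uniq_perm.
- by rewrite map_inj_uniq ?index_enum_uniq //; apply: val_inj.
- exact: bitseqs_uniq.
move=> s; rewrite mem_bitseqs; apply/mapP/eqP => [[x _ ->]|sz]; first exact: size_tuple.
by exists (Tuple (introT eqP sz)); rewrite ?mem_index_enum.
Qed.

Lemma big_bitseqs_cat (F : seq bool -> rat) m1 m2 :
  \sum_(s <- bitseqs (m1 + m2)) F s = \sum_(u <- bitseqs m1) \sum_(v <- bitseqs m2) F (u ++ v).
Proof.
elim: m1 F => [|m1 IH] F; first by rewrite big_seq1.
by rewrite addSn !big_bitseqsS; apply: eq_bigr => b _; rewrite IH.
Qed.

Definition rotl_event (r : nat) (al be ga x y : seq bool) : bool :=
  rot r (xors (addc x al false).1 (addc y be false).1) == (addc (rot r (xors x y)) ga false).1.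

Lemma adpXR_count n r (al be ga : bv n) : (r <= n)%N ->
  adpXR n r al be ga * (4 ^ n)%:R =
  \sum_(x <- bitseqs n) \sum_(y <- bitseqs n) (rotl_event r al be ga x y)%:R.
Proof.
move=> le_rn; rewrite /adpXR divfK ?pnatr_eq0 ?expn_eq0 //.
rewrite -sum1_card big_mkcond natr_sum -big_tuple_bitseqs.
under [RHS]eq_bigr do rewrite -big_tuple_bitseqs.
rewrite pair_bigA; apply: eq_bigr => -[x y] _.
by rewrite inE /= bv_eqE val_bv_rotl // val_bv_xor !val_bv_add val_bv_rotl // val_bv_xor.
Qed.

(** * Splitting the rotated equation *)

Definition low_event (al be ga : seq bool) (a b c : bool) (x y : seq bool) : bool :=
  let p1 := addc x al false in
  let p2 := addc y be false in
  [&& xors p1.1 p2.1 == (addc (xors x y) ga c).1, p1.2 == a & p2.2 == b].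

Definition high_event (al be ga : seq bool) (a b c : bool) (x y : seq bool) : bool :=
  let p3 := addc (xors x y) ga false in
  (xors (addc x al a).1 (addc y be b).1 == p3.1) && (p3.2 == c).

Section RotlSplit.
Variables (r k : nat) (al' be' ga' xh yh al be ga xl yl : seq bool).
Hypotheses (s_al' : size al' = r) (s_be' : size be' = r).
Hypotheses (s_xh : size xh = r) (s_yh : size yh = r).
Hypotheses (s_al : size al = k) (s_be : size be = k) (s_ga : size ga = k).
Hypotheses (s_xl : size xl = k) (s_yl : size yl = k).

Lemma rotl_event_cat :
  (rotl_event r (al' ++ al) (be' ++ be) (ga ++ ga') (xh ++ xl) (yh ++ yl))%:R =
  \sum_(a : bool) \sum_(b : bool) \sum_(c : bool)
    (high_event al' be' ga' a b c xh yh)%:R * (low_event al be ga a b c xl yl)%:R :> rat.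
Proof.
have rot_cat u v : size u = r -> rot r (u ++ v) = v ++ u by move=> <-; apply: rot_size_cat.
rewrite /rotl_event [xors (xh ++ _) _]xors_cat ?s_xh ?s_yh // rot_cat ?size_xors ?s_xh ?s_yh //.
rewrite !addc_cat ?size_xors ?s_xl ?s_yl ?s_ga ?s_xh ?s_al' ?s_yh ?s_be' //=.
rewrite xors_cat ?size_addc ?s_xh ?s_al' ?s_yh ?s_be' //.
rewrite rot_cat ?size_xors ?size_addc ?s_xh ?s_al' ?s_yh ?s_be' //.
rewrite eqseq_cat; last by rewrite !size_xors ?size_addc ?size_xors ?s_al ?s_be ?s_xl ?s_yl ?s_ga.
rewrite !big_bool /low_event /high_event /=.
case: (addc xl al false) => ? []; case: (addc yl be false) => ? [];
case: (addc (xors xh yh) ga' false) => ? [].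
all: by rewrite ?eqxx ?andbT ?andbF ?mul0r ?mulr0 ?add0r ?addr0 -?natrM ?mulnb /= andbC.
Qed.

End RotlSplit.

Lemma Lab_entry a b (t : 'I_8) : Lab a b 0 t = ((pbit0 t == a) && (pbit1 t == b))%:R.
Proof.
by case: a; case: b; rewrite /Lab /rowv mxE; case: t => [[|[|[|[|[|[|[|[|]]]]]]]] //].
Qed.

Lemma Lc_entry c (t : 'I_8) : Lc c 0 t = (pbit2 t == c)%:R.
Proof. by case: c; rewrite /Lc /rowv mxE; case: t => [[|[|[|[|[|[|[|[|]]]]]]]] //]. Qed.

Lemma sum_transition (w : 'I_8 -> rat) al be ga x y s :
  let p1 := addc x al (pbit0 s) in
  let p2 := addc y be (pbit1 s) in
  let p3 := addc (xors x y) ga (pbit2 s) in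
  \sum_(t < 8) w t * (transition al be ga x y s t)%:R =
  (xors p1.1 p2.1 == p3.1)%:R * w (pord p1.2 p2.2 p3.2).
Proof.
move=> p1 p2 p3; rewrite (bigD1 (pord p1.2 p2.2 p3.2)) //= big1 => [|t ne_t].
  by rewrite addr0 /transition -/p1 -/p2 -/p3 pordE eqxx andbT mulrC.
rewrite /transition -/p1 -/p2 -/p3.
have -> : (pidx p1.2 p2.2 p3.2 == t) = false by apply/negbTE; rewrite -pordE eq_sym.
by rewrite andbF mulr0.
Qed.

Lemma sum_weighted_transitions (w : 'I_8 -> rat) al be ga m s :
  \sum_(t < 8) w t * transitions al be ga m s t =
  \sum_(x <- bitseqs m) \sum_(y <- bitseqs m) \sum_(t < 8) w t * (transition al be ga x y s t)%:R.
Proof.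
under eq_bigr do rewrite big_distrr; rewrite exchange_big; apply: eq_bigr => x _.
by under eq_bigr do rewrite big_distrr; rewrite exchange_big.
Qed.

Lemma padp_count a b c m (al be ga : bv m) :
  padp a b al be (bv_cpow ga c) * (4 ^ m)%:R =
  \sum_(x <- bitseqs m) \sum_(y <- bitseqs m) (low_event al be ga a b c x y)%:R.
Proof.
transitivity (\sum_(t < 8) Lab a b 0 t * transitions al be ga m (pord false false c) t).
  apply: (@form_Aprod_cpow _ al be ga false false c (Lab a b)) => t.
  rewrite !Lab_entry; case: (pbit_xor3 t (pord false false c)) => -> -> _.
  by case: (pbit_pord false false c) => -> -> _; rewrite !addbF.
rewrite sum_weighted_transitions; apply: eq_bigr => x _; apply: eq_bigr => y _.
rewrite sum_transition; case: (pbit_pord false false c) => -> -> ->.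
rewrite Lab_entry.
case: (pbit_pord (addc x al false).2 (addc y be false).2 (addc (xors x y) ga c).2) => -> -> _.
by rewrite /low_event -natrM mulnb andbA.
Qed.

Lemma cadp_count a b c m (al be ga : bv m) :
  cadp c (bv_cpow al a) (bv_cpow be b) ga * (4 ^ m)%:R =
  \sum_(x <- bitseqs m) \sum_(y <- bitseqs m) (high_event al be ga a b c x y)%:R.
Proof.
transitivity (\sum_(t < 8) Lc c 0 t * transitions al be ga m (pord a b false) t).
  apply: (@form_Aprod_cpow _ al be ga a b false (Lc c)) => t.
  rewrite !Lc_entry; case: (pbit_xor3 t (pord a b false)) => _ _ ->.
  by case: (pbit_pord a b false) => _ _ ->; rewrite addbF.
rewrite sum_weighted_transitions; apply: eq_bigr => x _; apply: eq_bigr => y _.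
rewrite sum_transition; case: (pbit_pord a b false) => -> -> ->.
rewrite Lc_entry; case: (pbit_pord (addc x al a).2 (addc y be b).2 (addc (xors x y) ga false).2).
by move=> _ _ ->; rewrite /high_event -natrM mulnb.
Qed.

Lemma rotl_count_split m r k (al' be' ga' : bv r) (al be ga : bv k) : m = (r + k)%N ->
  \sum_(x <- bitseqs m) \sum_(y <- bitseqs m)
    (rotl_event r (al' ++ al) (be' ++ be) (ga ++ ga') x y)%:R =
  \sum_(a : bool) \sum_(b : bool) \sum_(c : bool)
    (\sum_(xh <- bitseqs r) \sum_(yh <- bitseqs r) (high_event al' be' ga' a b c xh yh)%:R) *
    (\sum_(xl <- bitseqs k) \sum_(yl <- bitseqs k) (low_event al be ga a b c xl yl)%:R) :> rat.
Proof.
move=> ->; rewrite big_bitseqs_cat.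
under eq_bigr => xh _ do under eq_bigr => xl _ do rewrite big_bitseqs_cat.
transitivity (\sum_(xh <- bitseqs r) \sum_(xl <- bitseqs k) \sum_(yh <- bitseqs r)
  \sum_(yl <- bitseqs k) \sum_(a : bool) \sum_(b : bool) \sum_(c : bool)
    (high_event al' be' ga' a b c xh yh)%:R * (low_event al be ga a b c xl yl)%:R : rat).
  apply: eq_big_seq => xh; rewrite mem_bitseqs => /eqP s_xh.
  apply: eq_big_seq => xl; rewrite mem_bitseqs => /eqP s_xl.
  apply: eq_big_seq => yh; rewrite mem_bitseqs => /eqP s_yh.
  apply: eq_big_seq => yl; rewrite mem_bitseqs => /eqP s_yl.
  by rewrite (@rotl_event_cat r k) ?size_tuple.
rewrite exchange_sum4; apply: eq_bigr => a _; rewrite exchange_sum4; apply: eq_bigr => b _.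
by rewrite exchange_sum4; apply: eq_bigr => c _; rewrite mul_sum2.
Qed.

Theorem theorem2 (n r : nat) (hn : (2 <= n)%N) (hr1 : (1 <= r)%N) (hr2 : (r <= n - 1)%N)
  (al be ga : bv (n - r)) (al' be' ga' : bv r) :
  adpXR n r (bv_cat n al' al) (bv_cat n be' be) (bv_cat n ga ga') =
  \sum_(a : bool) \sum_(b : bool) \sum_(c : bool)
     padp a b al be (bv_cpow ga c) * cadp c (bv_cpow al' a) (bv_cpow be' b) ga'.
Proof.
have le_rn : (r <= n)%N by lia.
have n_rl : (r + (n - r))%N = n by lia.
have n_lr : (n - r + r)%N = n by lia.
have pow4_split : (4 ^ n)%:R = (4 ^ (n - r))%:R * (4 ^ r)%:R :> rat.
  by rewrite -natrM -expnD n_lr.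
apply: (@mulIf _ (4 ^ n)%:R); first by rewrite pnatr_eq0 expn_eq0.
rewrite adpXR_count // !val_bv_cat // (rotl_count_split _ _ _ _ _ _ (esym n_rl)) mulr_suml.
apply: eq_bigr => a _; rewrite mulr_suml; apply: eq_bigr => b _; rewrite mulr_suml.
apply: eq_bigr => c _.
by rewrite pow4_split mulrACA padp_count cadp_count mulrC.
Qed.
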